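(* Let $G$ be a group acting geometrically on a systolic complex $X$ and let $h\in G$ be a hyperbolic isometry. Let $K\ge L(h)$ be an integer. Then there exists $C>0$ such that for all integers $K'$ with $L(h)\le K'\le K$ we have $\mathrm{Disp}_K(h)\subset B_C(\mathrm{Disp}_{K'}(h),X)$.
   Context: $X$ is a systolic complex (simply connected simplicial complex with flag, $6$-large vertex links, where $6$-large means every embedded cycle of length $4$ or $5$ has a diagonal), with the combinatorial metric $d$ on vertices. The action is geometric: by simplicial automorphisms, with finite vertex stabilisers, and cocompact. An isometry (simplicial automorphism) $h$ is hyperbolic if it fixes no simplex of $X$. $L(h)=\min_x d(x,h x)$ over vertices $x$ (the translation length). For an integer $K\ge L(h)$, $\mathrm{Disp}_K(h)$ is the subcomplex spanned by all vertices $x$ with $d(x,hx)\le K$. For a subcomplex $A$, $B_C(A,X)$ is the union over vertices $v\in A$ of the balls $B_C(v,X)$, where $B_C(v,X)$ is the subcomplex spanned by vertices at distance $\le C$ from $v$. *)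

(* A flag simplicial complex X is represented by its 1-skeleton:
   a vertex type V with a symmetric irreflexive adjacency relation; the
   simplices of X are exactly the nonempty finite cliques (flagness). *)
From Stdlib Require Import List Arith Relations.
Import ListNotations.
Set Implicit Arguments.

Section Defs.
Variable V : Type.
Variable adj : V -> V -> Prop.

Definition graph_ok : Prop :=
  (forall x, ~ adj x x) /\ (forall x y, adj x y -> adj y x).

Definition is_simplex (s : list V) : Prop :=
  s <> [] /\ forall x y, In x s -> In y s -> x <> y -> adj x y.

Definition same_set (s t : list V) : Prop := forall x, In x s <-> In x t.

Inductive walk : V -> V -> nat -> Prop :=
| walk_nil x : walk x x 0
| walk_cons x z y n : adj x z -> walk z y n -> walk x y (S n).

Definition dist_le (x y : V) (n : nat) : Prop := exists m, m <= n /\ walk x y m.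

Definition connected : Prop := inhabited V /\ forall x y, exists n, walk x y n.

Definition simp (x y : V) : Prop := x = y \/ adj x y.

Fixpoint edge_path (l : list V) : Prop :=
  match l with
  | x :: ((y :: _) as t) => simp x y /\ edge_path t
  | _ => True
  end.

Inductive elem_move : list V -> list V -> Prop :=
| em_tri l1 l2 x y z : simp x y -> simp y z -> simp x z ->
    elem_move (l1 ++ x :: y :: z :: l2) (l1 ++ x :: z :: l2)
| em_dup l1 l2 x : elem_move (l1 ++ x :: x :: l2) (l1 ++ x :: l2).

Definition homotopic : list V -> list V -> Prop := clos_refl_sym_trans _ elem_move.

Definition simply_connected : Prop :=
  connected /\
  forall x l, edge_path (x :: l) -> last (x :: l) x = x -> homotopic (x :: l) [x].

(* the link of v (a full subcomplex on the neighbours of v, by flagness) is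
   6-large: every embedded cycle of length 4 or 5 in it has a diagonal *)
Definition link_6large (v : V) : Prop :=
  forall (n : nat) (c : nat -> V),
    (n = 4 \/ n = 5) ->
    (forall i, i < n -> adj v (c i)) ->
    (forall i j, i < n -> j < n -> c i = c j -> i = j) ->
    (forall i, i < n -> adj (c i) (c (S i mod n))) ->
    exists i j, i < n /\ j < n /\ j <> i /\ j <> S i mod n /\ i <> S j mod n /\
                adj (c i) (c j).

Definition systolic : Prop :=
  graph_ok /\ simply_connected /\ forall v, link_6large v.

Definition transl_length (f : V -> V) (L : nat) : Prop :=
  (exists x, dist_le x (f x) L) /\ forall x n, dist_le x (f x) n -> L <= n.

Definition in_Disp (f : V -> V) (K : nat) (x : V) : Prop := dist_le x (f x) K.

(* Disp_K(f) ⊂ B_C(Disp_K'(f), X) as subcomplexes: every simplex of the full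
   subcomplex Disp_K(f) lies in some ball B_C(v, X) with v a vertex of Disp_K'(f) *)
Definition Disp_in_ball (f : V -> V) (K K' C : nat) : Prop :=
  forall s, is_simplex s -> (forall x, In x s -> in_Disp f K x) ->
    exists v, in_Disp f K' v /\ forall x, In x s -> dist_le v x C.

Definition hyperbolic (f : V -> V) : Prop :=
  forall s, is_simplex s -> ~ same_set (map f s) s.
End Defs.

Definition is_group (G : Type) (mul : G -> G -> G) (one : G) (inv : G -> G) : Prop :=
  (forall a b c, mul a (mul b c) = mul (mul a b) c) /\
  (forall a, mul one a = a) /\ (forall a, mul a one = a) /\
  (forall a, mul (inv a) a = one) /\ (forall a, mul a (inv a) = one).

(* geometric action: by simplicial automorphisms, finite vertex stabilisers,
   cocompact (finitely many orbits of simplices) *)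
Definition geometric_action (G V : Type) (adj : V -> V -> Prop)
    (mul : G -> G -> G) (one : G) (act : G -> V -> V) : Prop :=
  (forall x, act one x = x) /\
  (forall g h x, act (mul g h) x = act g (act h x)) /\
  (forall g x y, adj x y <-> adj (act g x) (act g y)) /\
  (forall v, exists l : list G, forall g, act g v = v -> In g l) /\
  (exists reps : list (list V), forall s, is_simplex adj s ->
      exists r g, In r reps /\ same_set s (map (act g) r)).

(* By cocompactness
   every vertex x of Disp_K(h) is g x0 with x0 in a finite set R of orbit
   representatives, and then x0 lies in Disp_K(g^-1 h g).  Properness makes the
   set of conjugates k moving some x0 in R by at most K finite; for each such
   pair (x0, k) fix a vertex of Disp_L(k) (nonempty, as k is conjugate to h) and
   let C bound its distance to x0.  Translating back by g puts a vertex of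
   Disp_L(h) within C of x, hence within C + 1 of every simplex through x. *)

From Stdlib Require Import List Arith Lia Classical.
Import ListNotations.
Set Implicit Arguments.

Definition finite (A : Type) (P : A -> Prop) : Prop :=
  exists l, forall a, P a -> In a l.

Lemma finite_big_union (A B : Type) (N : list A) (Q : A -> B -> Prop) :
  (forall a, In a N -> finite (Q a)) ->
  finite (fun b => exists a, In a N /\ Q a b).
Proof.
  induction N as [|a N IH]; intros HQ.
  - exists []. intros b (a & [] & _).
  - destruct (HQ a (or_introl eq_refl)) as [l1 H1].
    destruct IH as [l2 H2]; [intros; apply HQ; now right|].
    exists (l1 ++ l2). intros b (a' & [<-|Ha'] & Hq); apply in_or_app.
    + left; auto.
    + right; apply H2; eauto.
Qed.

Lemma exists_uniform_bound (A : Type) (N : list A) (P : A -> nat -> Prop) :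
  (forall a n n', n <= n' -> P a n -> P a n') ->
  (forall a, In a N -> exists n, P a n) ->
  exists C, forall a, In a N -> P a C.
Proof.
  intros Pmono; induction N as [|a N IH]; intros HP.
  - exists 0. intros a [].
  - destruct (HP a (or_introl eq_refl)) as [n Hn].
    destruct IH as [C HC]; [intros; apply HP; now right|].
    exists (max n C). intros a' [<-|Ha'].
    + apply (Pmono _ n); [lia | exact Hn].
    + apply (Pmono _ C); [lia | auto].
Qed.

Section Graph.
Variable V : Type.
Variable adj : V -> V -> Prop.

Lemma walk_map (f : V -> V) :
  (forall a b, adj a b -> adj (f a) (f b)) ->
  forall a b n, walk adj a b n -> walk adj (f a) (f b) n.
Proof. intros Hf a b n W; induction W; econstructor; eauto. Qed.

Lemma walk_snoc a b c n : walk adj a b n -> adj b c -> walk adj a c (S n).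
Proof.
  intros W; induction W; intros Hbc; econstructor; eauto. constructor.
Qed.

Lemma dist_le_map (f : V -> V) :
  (forall a b, adj a b -> adj (f a) (f b)) ->
  forall a b n, dist_le adj a b n -> dist_le adj (f a) (f b) n.
Proof. intros Hf a b n (m & Hm & W). exists m. split; [exact Hm | now apply walk_map]. Qed.

Lemma dist_le_mono a b n n' : n <= n' -> dist_le adj a b n -> dist_le adj a b n'.
Proof. intros Hn (m & Hm & W). exists m. split; [lia | exact W]. Qed.

Lemma dist_le_snoc a b c n : dist_le adj a b n -> adj b c -> dist_le adj a c (S n).
Proof. intros (m & Hm & W) Hbc. exists (S m). split; [lia | eapply walk_snoc; eauto]. Qed.

Lemma dist_le_simplex v s x n :
  is_simplex adj s -> In x s -> dist_le adj v x n ->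
  forall y, In y s -> dist_le adj v y (S n).
Proof.
  intros [_ Hs] Hx Hvx y Hy.
  destruct (classic (x = y)) as [<-|Hxy].
  - exact (dist_le_mono (le_S _ _ (le_n n)) Hvx).
  - exact (dist_le_snoc Hvx (Hs x y Hx Hy Hxy)).
Qed.

Lemma ball_finite :
  (forall v, finite (adj v)) -> forall n x, finite (fun y => dist_le adj x y n).
Proof.
  intros Hnb; induction n as [|n IH]; intros x.
  - exists [x]. intros y (m & Hm & W).
    replace m with 0 in W by lia. inversion W; subst. now left.
  - destruct (Hnb x) as [N HN].
    destruct (finite_big_union N (fun z y => dist_le adj z y n)) as [l Hl].
    { intros z _. apply IH. }
    exists (x :: l). intros y (m & Hm & W). inversion W as [|? z ? m' Hxz Wzy]; subst.
    + now left.
    + right. apply Hl. exists z. split; [now apply HN|]. exists m'. split; [lia | exact Wzy].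
Qed.

Hypothesis adj_connected : forall x y, exists n, walk adj x y n.

Lemma uniform_distance_bound (I : Type) (pts : list I) (base : I -> V)
    (S : I -> V -> Prop) :
  exists C, forall i, In i pts -> (exists y, S i y) ->
    exists y, S i y /\ dist_le adj y (base i) C.
Proof.
  apply exists_uniform_bound.
  - intros i n n' Hn HP Hne. destruct (HP Hne) as (y & Hy & Hd).
    exists y. split; [exact Hy | exact (dist_le_mono Hn Hd)].
  - intros i _. destruct (classic (exists y, S i y)) as [[y Hy]|Hempty].
    + destruct (adj_connected y (base i)) as [n W].
      exists n. intros _. exists y. split; [exact Hy|]. exists n. split; auto.
    + exists 0. intros Hne. contradiction.
Qed.

End Graph.

Section GeometricAction.
Variables (V G : Type) (adj : V -> V -> Prop).
Variables (mul : G -> G -> G) (one : G) (inv : G -> G) (act : G -> V -> V).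
Hypothesis Hgrp : is_group mul one inv.
Hypothesis Hgeo : geometric_action adj mul one act.
Hypothesis adj_sym : forall x y, adj x y -> adj y x.

Lemma act_mul g k x : act (mul g k) x = act g (act k x).
Proof. destruct Hgeo as (_ & H & _). apply H. Qed.

Lemma act_inv_l g x : act (inv g) (act g x) = x.
Proof.
  destruct Hgrp as (_ & _ & _ & Hinv & _). destruct Hgeo as (Hone & _).
  now rewrite <- act_mul, Hinv, Hone.
Qed.

Lemma act_inv_r g x : act g (act (inv g) x) = x.
Proof.
  destruct Hgrp as (_ & _ & _ & _ & Hinv). destruct Hgeo as (Hone & _).
  now rewrite <- act_mul, Hinv, Hone.
Qed.

Lemma adj_act g x y : adj x y -> adj (act g x) (act g y).
Proof. destruct Hgeo as (_ & _ & H & _). apply H. Qed.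

Lemma dist_le_act g x y n : dist_le adj x y n -> dist_le adj (act g x) (act g y) n.
Proof. apply dist_le_map, adj_act. Qed.

(* The transporter from a to v is a coset k Stab(a), finite with Stab(a). *)
Lemma transporter_finite a v : finite (fun g => act g a = v).
Proof.
  destruct Hgrp as (Hassoc & Hone_l & _ & _ & Hinv_r).
  destruct Hgeo as (_ & _ & _ & Hstab & _).
  destruct (classic (exists k, act k a = v)) as [[k Hk]|Hnone].
  - destruct (Hstab a) as [l Hl]. exists (map (mul k) l).
    intros g Hg. replace g with (mul k (mul (inv k) g)).
    + apply in_map, Hl. now rewrite act_mul, Hg, <- Hk, act_inv_l.
    + now rewrite Hassoc, Hinv_r, Hone_l.
  - exists []. intros g Hg. apply Hnone. now exists g.
Qed.

Lemma simplex_orbit_reps : exists R : list V, forall s, is_simplex adj s ->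
  exists g, forall x, In x s -> exists x0, In x0 R /\ act g x0 = x.
Proof.
  destruct Hgeo as (_ & _ & _ & _ & reps & Hreps).
  exists (concat reps). intros s Hs.
  destruct (Hreps s Hs) as (r & g & Hr & Hsame). exists g.
  intros x Hx. apply Hsame, in_map_iff in Hx as (x0 & Hgx0 & Hx0).
  exists x0. split; [apply in_concat; eauto | exact Hgx0].
Qed.

Lemma neighbours_finite v : finite (adj v).
Proof.
  destruct simplex_orbit_reps as [R HR].
  destruct (finite_big_union R (fun a g => act g a = v)) as [gs Hgs].
  { intros a _. apply transporter_finite. }
  exists (flat_map (fun g => map (act g) R) gs). intros w Hvw.
  assert (Hedge : is_simplex adj [v; w]).
  { split; [discriminate|].
    intros x y [<-|[<-|[]]] [<-|[<-|[]]] Hxy; auto; contradiction. }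
  destruct (HR _ Hedge) as [g Hg].
  destruct (Hg v) as (a & Ha & Hga); [now left|].
  destruct (Hg w) as (b & Hb & Hgb); [right; now left|].
  apply in_flat_map. exists g. split.
  - apply Hgs. eauto.
  - rewrite <- Hgb. now apply in_map.
Qed.

Lemma displacing_finite x0 K : finite (fun k => dist_le adj x0 (act k x0) K).
Proof.
  destruct (ball_finite adj neighbours_finite K x0) as [B HB].
  destruct (finite_big_union B (fun y k => act k x0 = y)) as [ks Hks].
  { intros y _. apply transporter_finite. }
  exists ks. intros k Hk. apply Hks. exists (act k x0). split; [now apply HB | reflexivity].
Qed.

Definition conjg (g h : G) : G := mul (inv g) (mul h g).

Lemma in_Disp_conjg g h K y :
  in_Disp adj (act (conjg g h)) K y <-> in_Disp adj (act h) K (act g y).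
Proof.
  unfold in_Disp, conjg. rewrite !act_mul. split; intros Hd.
  - apply (dist_le_act g) in Hd. now rewrite act_inv_r in Hd.
  - rewrite <- (act_inv_l g y) at 1. now apply dist_le_act.
Qed.

Hypothesis adj_connected : forall x y, exists n, walk adj x y n.

Lemma Disp_near_Disp h K L :
  (exists z, in_Disp adj (act h) L z) ->
  exists C, forall x, in_Disp adj (act h) K x ->
    exists v, in_Disp adj (act h) L v /\ dist_le adj v x C.
Proof.
  intros [z Hz].
  destruct simplex_orbit_reps as [R HR].
  destruct (finite_big_union R (fun x0 k => in_Disp adj (act k) K x0)) as [ks Hks].
  { intros x0 _. apply displacing_finite. }
  destruct (uniform_distance_bound adj_connected (list_prod R ks) fst
              (fun p => in_Disp adj (act (snd p)) L)) as [C HC].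
  exists C. intros x Hx.
  assert (Hpt : is_simplex adj [x]).
  { split; [discriminate|]. intros a b [<-|[]] [<-|[]] Hab. contradiction. }
  destruct (HR _ Hpt) as [g Hg].
  destruct (Hg x) as (x0 & Hx0 & <-); [now left|].
  assert (Hk : In (conjg g h) ks).
  { apply Hks. exists x0. split; [exact Hx0 | now apply in_Disp_conjg]. }
  destruct (HC (x0, conjg g h)) as (y0 & Hy0 & Hd); [now apply in_prod | |].
  - exists (act (inv g) z). apply in_Disp_conjg. now rewrite act_inv_r.
  - exists (act g y0). split; [now apply in_Disp_conjg | now apply dist_le_act].
Qed.

End GeometricAction.

Theorem lemma4p2 (V G : Type) (adj : V -> V -> Prop)
    (mul : G -> G -> G) (one : G) (inv : G -> G) (act : G -> V -> V)
    (Hgrp : is_group mul one inv)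
    (Hsys : systolic adj)
    (Hgeo : geometric_action adj mul one act)
    (h : G) (Hh : hyperbolic adj (act h))
    (L K : nat) (HL : transl_length adj (act h) L) (HK : L <= K) :
  exists C : nat, 0 < C /\
    forall K' : nat, L <= K' -> K' <= K -> Disp_in_ball adj (act h) K K' C.
Proof.
  destruct Hsys as ((_ & Hsym) & ((_ & Hconn) & _) & _).
  destruct HL as [HDispL _].
  destruct (Disp_near_Disp Hgrp Hgeo Hsym Hconn h K HDispL) as [C HC].
  exists (S C). split; [lia|].
  intros K' HLK' _ s Hs HsK.
  destruct s as [|x s]; [now destruct Hs|].
  destruct (HC x (HsK x (or_introl eq_refl))) as (v & Hv & Hvx).
  exists v. split.
  - exact (dist_le_mono HLK' Hv).
  - exact (dist_le_simplex Hs (or_introl eq_refl) Hvx).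
Qed.
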